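(* For every $v\in\mathbb T_F$ and $i\in[1,n]$, the pull-back $\mu_{v_0}^*(X_{i;v})\in R(X_1,\dots,X_n)$ satisfies $$\lim_{\mathbf t\to0}\mu_{v_0}^*(X_{i;v})=\mathbf X^{\mathbf c_{i;v}}:=X_1^{c_{1i;v}}\cdots X_n^{c_{ni;v}}$$ (the limit along any path $\gamma:[0,1]\to\mathbb C^n$ with $\gamma(1)=0$). Moreover, $\mu_{v_0}^*(X_{i;v})$ is the unique homogenization of degree $\mathbf c_{i;v}$ of the coefficient-free rational function $\mu_{v_0}^*(X_{i;v})|_{\mathbf t=(1,\dots,1)}\in\mathbb C(X_1,\dots,X_n)$ satisfying this limit property; here, writing that coefficient-free function as $f/g$ with $f,g\in\mathbb C[X_1,\dots,X_n]$ coprime, a homogenization of degree $\mathbf c$ means a rational function $\tilde f/\tilde g$ homogeneous of degree $\mathbf c$ for the standard grading, where $\tilde f,\tilde g\in R[X_1,\dots,X_n]$ are obtained from $f,g$ by multiplying each monomial by a monomial in $t_1,\dots,t_n$.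
   Context: Fix $n\ge1$, a skew-symmetrizable integer matrix $B\in\mathbb Z^{n\times n}$ and a subset $F\subseteq[1,n]$ of frozen directions. Matrix mutation in direction $k$: $b'_{ij}=-b_{ij}$ if $i=k$ or $j=k$, else $b'_{ij}=b_{ij}+\operatorname{sgn}(b_{ik})[b_{ik}b_{kj}]_+$, with $[x]_+=\max(x,0)$ (componentwise on vectors). Let $\mathbb T$ be the $n$-regular tree with edges labeled by $[1,n]$ (distinct labels at each vertex) and initial vertex $v_0$, and $\mathbb T_F$ the subtree of vertices reachable from $v_0$ using only edges with labels in $[1,n]\setminus F$. Set $B_{v_0}=B$ and $B_{v'}=\mu_k(B_v)$ for an edge $v\overset{k}{-}v'$; write $B_v=(b^v_{ij})$. The $\mathbf c$-vectors $\mathbf c_{j;v}=(c_{1j;v},\dots,c_{nj;v})\in\mathbb Z^n$ are defined by $\mathbf c_{j;v_0}=\mathbf e_j$ and, for an edge $v\overset{k}{-}v'$, $c_{ik;v'}=-c_{ik;v}$ and $c_{ij;v'}=c_{ij;v}+[c_{ik;v}]_+b^v_{kj}+c_{ik;v}[-b^v_{kj}]_+$ for $j\ne k$. Each $\mathbf c_{j;v}$ is nonzero and sign-coherent (all entries $\ge0$ or all $\le0$). Let $R=\mathbb C[t_1,\dots,t_n]$ and $\mathbf t^{\mathbf a}=\prod t_i^{a_i}$ for $\mathbf a\in\mathbb Z_{\ge0}^n$. For $v\in\mathbb T_F$ let $U_v=\operatorname{Spec}R[X_{1;v},\dots,X_{n;v}]$. For an edge $v\overset{k}{-}v'$ in $\mathbb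 T_F$ let $\mu_k:U_v\dashrightarrow U_{v'}$ be the birational map with pull-back $\mu_k^*(X_{k;v'})=X_{k;v}^{-1}$ and, for $i\ne k$, $\mu_k^*(X_{i;v'})=X_{i;v}\big(\mathbf t^{[\operatorname{sgn}(b^v_{ki})\mathbf c_{k;v}]_+}+\mathbf t^{[-\operatorname{sgn}(b^v_{ki})\mathbf c_{k;v}]_+}X_{k;v}^{-\operatorname{sgn}(b^v_{ki})}\big)^{-b^v_{ki}}$. $\widehat{\mathscr X}$ is the $R$-scheme obtained by gluing the $U_v$ along the largest open subsets on which the composite maps are isomorphisms. Write $X_i:=X_{i;v_0}$; $\mu_{v_0}^*(X_{i;v})\in R(X_1,\dots,X_n)$ is obtained by iterating these pull-backs along the path from $v$ to $v_0$. Standard grading: $\deg X_i=\mathbf e_i$, $\deg t_i=-\mathbf e_i$, extended to ratios of homogeneous elements by $\deg(f/g)=\deg f-\deg g$. *)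

From HB Require Import structures.
From mathcomp Require Import all_boot all_order all_algebra.
From mathcomp Require Import fraction.
From mathcomp Require Import Rstruct.
From mathcomp Require Import complex.
From mathcomp Require Import mpoly.
Set Implicit Arguments. Unset Strict Implicit. Unset Printing Implicit Defensive.
Import Order.TTheory GRing.Theory Num.Theory.
Local Open Scope ring_scope.

Notation "x %:F" := (@FracField.tofrac _ x) (format "x %:F") : ring_scope.

Definition RR : rcfType := Rdefinitions.R.
Definition Cc := (RR)[i].
Definition normC (z : Cc) : RR := ComplexField.Normc.normc z.

Definition pos (x : int) : int := Num.max x 0.

Definition skew_symmetrizable n (B : 'M[int]_n) : Prop :=
  exists d : 'I_n -> nat, (forall i, (0 < d i)%N) /\
    forall i j, (d i)%:Z * B i j = - ((d j)%:Z * B j i).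

Definition mut_mat n (k : 'I_n) (B : 'M[int]_n) : 'M[int]_n :=
  \matrix_(i, j) (if (i == k) || (j == k) then - B i j
                  else B i j + sgz (B i k) * pos (B i k * B k j)).

(* c-vector mutation; column j of Cm is c_{j;v}, entry (i,j) is c_{ij;v};
   B is the exchange matrix B_v at the vertex v being mutated from *)
Definition mut_c n (k : 'I_n) (B Cm : 'M[int]_n) : 'M[int]_n :=
  \matrix_(i, j) (if j == k then - Cm i k
                  else Cm i j + pos (Cm i k) * B k j + Cm i k * pos (- B k j)).

(* Vertices of the tree T are identified with reduced words (the labels of the
   unique path from v0); T_F = reduced words with all labels outside F. *)
Definition reduced n (p : seq 'I_n) : bool := sorted (fun a b => a != b) p.
Definition in_TF n (F : {set 'I_n}) (p : seq 'I_n) : bool :=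
  reduced p && all (fun k => k \notin F) p.

Definition Bv n (B : 'M[int]_n) (p : seq 'I_n) : 'M[int]_n :=
  (foldl (fun st k => (mut_mat k st.1, mut_c k st.1 st.2)) (B, 1%:M) p).1.
Definition Cv n (B : 'M[int]_n) (p : seq 'I_n) : 'M[int]_n :=
  (foldl (fun st k => (mut_mat k st.1, mut_c k st.1 st.2)) (B, 1%:M) p).2.

Definition sign_coherent n (Cm : 'M[int]_n) : Prop :=
  forall j : 'I_n, (exists i, Cm i j != 0) /\
    ((forall i, 0 <= Cm i j) \/ (forall i, Cm i j <= 0)).

(* R[X_1..X_n] = C[t_1..t_n, X_1..X_n]: variable lshift n i is t_i,
   variable rshift n i is X_i. *)
Definition Pol n := {mpoly Cc[n + n]}.
Definition KK n := {fraction Pol n}.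
Definition tP n (i : 'I_n) : Pol n := 'X_(lshift n i).
Definition xP n (i : 'I_n) : Pol n := 'X_(rshift n i).
Definition tK n (i : 'I_n) : KK n := (tP i)%:F.
Definition xK n (i : 'I_n) : KK n := (xP i)%:F.

(* t^a for an integer vector a (used only with a >= 0) *)
Definition tmon n (a : 'I_n -> int) : KK n := \prod_i tK i ^ a i.
Definition xmonK n (c : 'I_n -> int) : KK n := \prod_i xK i ^ c i.

(* one step of pull-back: Y i = mu_{v0}^*(X_{i;v}) given B = B_v, Cm = C_v;
   returns mu_{v0}^*(X_{i;v'}) for v -k- v' *)
Definition mut_Y n (k : 'I_n) (B Cm : 'M[int]_n) (Y : 'I_n -> KK n)
  : 'I_n -> KK n :=
  fun i => if i == k then (Y k)^-1 else
    let b := B k i in let s := sgz b in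
    Y i * (tmon (fun l => pos (s * Cm l k))
           + tmon (fun l => pos (- s * Cm l k)) * Y k ^ (- s)) ^ (- b).

Definition seed_step n (st : 'M[int]_n * 'M[int]_n * ('I_n -> KK n)) (k : 'I_n) :=
  (mut_mat k st.1.1, mut_c k st.1.1 st.1.2, mut_Y k st.1.1 st.1.2 st.2).

(* mu_{v0}^*(X_{i;v}) for the vertex v reached by the word p *)
Definition pullback n (B : 'M[int]_n) (p : seq 'I_n) (i : 'I_n) : KK n :=
  (foldl (@seed_step n) (B, 1%:M, @xK n) p).2 i.

Definition pt n (t X : 'I_n -> Cc) : 'I_(n + n) -> Cc :=
  fun k => match split k with inl i => t i | inr i => X i end.

Definition valueAt n (h : KK n) (q : 'I_(n + n) -> Cc) (z : Cc) : Prop :=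
  exists P Q : Pol n, meval q Q != 0 /\ h = P%:F / Q%:F /\
                      z = meval q P / meval q Q.

Definition path_cont n (gam : RR -> 'I_n -> Cc) : Prop :=
  forall s : RR, 0 <= s <= 1 -> forall e : RR, 0 < e -> exists2 d : RR, 0 < d &
    forall s' : RR, 0 <= s' <= 1 -> `|s' - s| < d ->
      forall i, normC (gam s' i - gam s i) < e.

(* lim_{t -> 0} h = X^c along every path:  for generic X (outside the zero set
   of a nonzero polynomial D in X), for every continuous path gam with
   gam(1) = 0 along which h(gam(s), X) is defined for s < 1 close to 1,
   h(gam(s), X) tends to X^c as s -> 1. *)
Definition LimitProp n (h : KK n) (c : 'I_n -> int) : Prop :=
  exists2 D : {mpoly Cc[n]}, D != 0 &
  forall X : 'I_n -> Cc, meval X D != 0 ->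
  forall gam : RR -> 'I_n -> Cc, path_cont gam -> gam 1 = (fun _ => 0) ->
  (exists2 d0 : RR, 0 < d0 & forall s : RR, 1 - d0 < s < 1 ->
      exists z, valueAt h (pt (gam s) X) z) ->
  forall e : RR, 0 < e -> exists2 d : RR, 0 < d &
    forall s : RR, 1 - d < s < 1 -> forall z, valueAt h (pt (gam s) X) z ->
      normC (z - \prod_j X j ^ c j) < e.

Definition at1 n (P : Pol n) : {mpoly Cc[n]} :=
  comp_mpoly [tuple (match split k with inl _ => 1 | inr i => 'X_i end)
             | k < n + n] P.

Definition SpecOne n (h : KK n) (f g : {mpoly Cc[n]}) : Prop :=
  exists P Q : Pol n, h = P%:F / Q%:F /\ at1 Q != 0 /\ at1 P * g = at1 Q * f.

Definition mcoprime n (f g : {mpoly Cc[n]}) : Prop :=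
  forall d a b : {mpoly Cc[n]}, f = d * a -> g = d * b -> (msize d <= 1)%N.

Definition tlift n (a : 'X_{1..n} -> 'I_n -> nat) (f : {mpoly Cc[n]}) : Pol n :=
  \sum_(m <- msupp f) f@_m *:
     ((\prod_i tP i ^+ a m i) * (\prod_i xP i ^+ m i)).

(* homogeneous polynomial of degree d: deg X_i = e_i, deg t_i = - e_i *)
Definition ishomog n (P : Pol n) (d : 'I_n -> int) : Prop :=
  forall m, m \in msupp P ->
    forall i, (m (rshift n i))%:Z - (m (lshift n i))%:Z = d i.

Definition homogK n (h : KK n) (c : 'I_n -> int) : Prop :=
  exists P Q : Pol n, exists d1 d2 : 'I_n -> int,
    Q != 0 /\ h = P%:F / Q%:F /\ ishomog P d1 /\ ishomog Q d2 /\
    forall i, d1 i - d2 i = c i.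

Definition IsHomogenization n (h : KK n) (f g : {mpoly Cc[n]}) (c : 'I_n -> int)
  : Prop :=
  exists a b : 'X_{1..n} -> 'I_n -> nat,
    h = (tlift a f)%:F / (tlift b g)%:F /\ homogK h c.

(* Induction along the mutation path shows that every pull-back has the form
   X^c * A / B, where A and B are homogeneous polynomials in t and X of the same
   degree that agree and do not vanish at t = 0.  Such forms are closed under
   products and integer powers, and because c_{k;v} is sign-coherent one of the
   two terms of the exchange binomial dominates as t -> 0, so the binomial is
   of this form too.  Hence the pull-back tends to X^c as t -> 0, and it is
   homogeneous of degree c.  A homogeneous rational function is determined by
   its specialization at t = (1,...,1), because setting t = 1 is injective on
   homogeneous polynomials; this gives the existence and the uniqueness of the
   homogenization. *)

From Pilot Require Import Defs.
From HB Require Import structures.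
From mathcomp Require Import all_boot all_order all_algebra.
From mathcomp Require Import fraction.
From mathcomp Require Import Rstruct.
From mathcomp Require Import complex.
From mathcomp Require Import mpoly.
From mathcomp Require Import ring lra zify.
From Stdlib Require Import Classical.
Import Order.TTheory GRing.Theory Num.Theory.
Local Open Scope ring_scope.
Set Implicit Arguments. Unset Strict Implicit. Unset Printing Implicit Defensive.

(* mpoly exports an unrelated [ishomog] *)
Local Notation ishomog := Defs.ishomog.

Lemma gez0_pos (x : int) : 0 <= x -> pos x = x.
Proof. by move=> h; apply/max_idPl. Qed.

Lemma lez0_pos (x : int) : x <= 0 -> pos x = 0.
Proof. by move=> h; apply/max_idPr. Qed.

Lemma pos_ge0 (x : int) : 0 <= pos x.
Proof. by rewrite /pos le_max lexx orbT. Qed.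

Lemma pos_subr (x : int) : x = pos x - pos (- x).
Proof.
case: (lerP 0 x) => h; first by rewrite gez0_pos // lez0_pos ?subr0 //; lia.
by rewrite lez0_pos ?gez0_pos ?opprK ?sub0r //; lia.
Qed.

Lemma mul_pos_sgz (b c : int) : b * pos (sgz b * c) = pos c * b + c * pos (- b).
Proof.
case: (ltrgtP b 0) => hb; last by rewrite hb /pos /=; ring.
- rewrite ltr0_sgz // mulN1r (gez0_pos (x := - b)); last lia.
  case: (lerP 0 c) => hc.
  + by rewrite lez0_pos ?gez0_pos; [ring | lia | lia].
  + by rewrite (gez0_pos (x := - c)) ?(lez0_pos (x := c)); [ring | lia | lia].
- by rewrite gtr0_sgz // mul1r (lez0_pos (x := - b)); [ring | lia].
Qed.

Lemma cross_mul_trans (R : idomainType) (a b c d e f : R) : d != 0 ->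
  a * d = c * b -> c * f = e * d -> a * f = e * b.
Proof.
move=> nd E1 E2; apply: (mulIf nd).
by rewrite mulrAC E1 mulrAC E2 mulrAC.
Qed.

Section Grading.
Variable n : nat.
Implicit Types (P Q : Pol n) (d : 'I_n -> int) (m : 'X_{1..n+n}).

Definition weight m (i : 'I_n) : int := (m (rshift n i))%:Z - (m (lshift n i))%:Z.

Lemma weightD m1 m2 i : weight (m1 + m2)%MM i = weight m1 i + weight m2 i.
Proof. by rewrite /weight !mnmDE !PoszD; ring. Qed.

Lemma eq_homog P d d' : ishomog P d -> d =1 d' -> ishomog P d'.
Proof. by move=> h e m hm i; rewrite -e; apply: h. Qed.

Lemma homog0 d : ishomog (0 : Pol n) d.
Proof. by move=> m; rewrite msupp0. Qed.

Lemma homogD P Q d : ishomog P d -> ishomog Q d -> ishomog (P + Q) d.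
Proof.
by move=> hP hQ m /msuppD_le; rewrite mem_cat => /orP[]; [apply: hP | apply: hQ].
Qed.

Lemma homogZ a P d : ishomog P d -> ishomog (a *: P) d.
Proof. by move=> hP m /msuppZ_le; apply: hP. Qed.

Lemma homogN P d : ishomog P d -> ishomog (- P) d.
Proof. by rewrite -scaleN1r; apply: homogZ. Qed.

Lemma homogM P Q d1 d2 : ishomog P d1 -> ishomog Q d2 ->
  ishomog (P * Q) (fun i => d1 i + d2 i).
Proof.
move=> hP hQ m /msuppM_le /allpairsP [[m1 m2] /= [h1 h2 ->]] i.
rewrite -[LHS]/(weight (m1 + m2)%MM i) weightD.
by congr (_ + _); [exact: hP | exact: hQ].
Qed.

Lemma homogX m : ishomog ('X_[m] : Pol n) (weight m).
Proof. by move=> m'; rewrite msuppX inE => /eqP ->. Qed.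

Lemma homog1 : ishomog (1 : Pol n) (fun _ => 0).
Proof. by move=> m; rewrite msupp1 inE => /eqP -> i; rewrite /weight !mnm0E. Qed.

Definition txmnm (a b : 'I_n -> nat) : 'X_{1..n+n} :=
  [multinom match split k with inl i => a i | inr i => b i end | k < n + n].

Lemma txmnm_t a b i : txmnm a b (lshift n i) = a i.
Proof. by rewrite mnmE (unsplitK (inl _ i)). Qed.

Lemma txmnm_x a b i : txmnm a b (rshift n i) = b i.
Proof. by rewrite mnmE (unsplitK (inr _ i)). Qed.

Lemma weight_txmnm a b i : weight (txmnm a b) i = (b i)%:Z - (a i)%:Z.
Proof. by rewrite /weight txmnm_t txmnm_x. Qed.

Lemma mpolyX_txmnm a b :
  'X_[txmnm a b] = (\prod_i tP i ^+ a i) * (\prod_i xP i ^+ b i) :> Pol n.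
Proof.
rewrite mpolyXE_id big_split_ord /=.
by congr (_ * _); apply: eq_bigr => i _; rewrite ?txmnm_t ?txmnm_x.
Qed.

Lemma mpolyX_neq0 k (m : 'X_{1..k}) : ('X_[m] : {mpoly Cc[k]}) != 0.
Proof. by rewrite -msupp_eq0 msuppX. Qed.

End Grading.

Section Specialization.
Variable n : nat.
Implicit Types (P Q : Pol n) (d : 'I_n -> int) (m : 'X_{1..n+n}).

Definition at0 P : {mpoly Cc[n]} :=
  comp_mpoly [tuple (match split k with inl _ => 0 | inr i => 'X_i end)
             | k < n + n] P.

HB.instance Definition _ := GRing.RMorphism.copy (@at1 n) (comp_mpoly _).
HB.instance Definition _ := GRing.RMorphism.copy at0 (comp_mpoly _).

Definition xpart m : 'X_{1..n} := [multinom m (rshift n i) | i < n].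

Lemma at0_neq0 P : at0 P != 0 -> P != 0.
Proof. by apply: contraNneq => ->; rewrite rmorph0. Qed.

Lemma at1M P Q : at1 (P * Q) = at1 P * at1 Q.
Proof. exact: rmorphM. Qed.

Lemma at1B P Q : at1 (P - Q) = at1 P - at1 Q.
Proof. exact: rmorphB. Qed.

Lemma at1Z a P : at1 (a *: P) = a *: at1 P.
Proof. exact: comp_mpolyZ. Qed.

Lemma at1X m : at1 'X_[m] = 'X_[xpart m].
Proof.
rewrite /at1 comp_mpolyX big_split_ord /= [RHS]mpolyXE_id big1 ?mul1r.
  by apply: eq_bigr => i _; rewrite tnth_mktuple (unsplitK (inr _ i)) mnmE.
by move=> i _; rewrite tnth_mktuple (unsplitK (inl _ i)) expr1n.
Qed.

Lemma at0_txmnm (k : 'I_n -> nat) i : k i != 0%N -> at0 'X_[txmnm k k] = 0.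
Proof.
move=> ki; rewrite /at0 comp_mpolyX big_split_ord /= (bigD1 i) //=.
by rewrite tnth_mktuple (unsplitK (inl _ i)) txmnm_t expr0n (negbTE ki) !mul0r.
Qed.

Lemma meval_at0 (x : 'I_n -> Cc) P : meval x (at0 P) = meval (pt (fun _ => 0) x) P.
Proof.
rewrite /at0 comp_mpoly_meval; apply: meval_eq => k; rewrite tnth_mktuple /pt.
by case: (split k) => i; rewrite ?meval0 ?mevalXU.
Qed.

Lemma at1_tlift (a : 'X_{1..n} -> 'I_n -> nat) f : at1 (tlift a f) = f.
Proof.
rewrite /tlift raddf_sum /= [RHS]mpolyE; apply: eq_bigr => m _.
rewrite -mpolyX_txmnm at1Z at1X; congr (_ *: 'X_[_]).
by apply/mnmP => i; rewrite mnmE txmnm_x.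
Qed.

(* on a homogeneous polynomial the t-exponents are recovered from the
   X-exponents, so t = 1 loses no information *)
Lemma xpart_inj_homog P d m1 m2 : ishomog P d ->
  m1 \in msupp P -> m2 \in msupp P -> xpart m1 = xpart m2 -> m1 = m2.
Proof.
move=> hP h1 h2 /mnmP e; apply/mnmP => k.
have ex i : m1 (rshift n i) = m2 (rshift n i) by have := e i; rewrite !mnmE.
case: (split_ordP k) => i -> //.
by have := hP _ h1 i; have := hP _ h2 i; rewrite ex; lia.
Qed.

Lemma at1_coeff_homog P d m : ishomog P d -> m \in msupp P ->
  (at1 P)@_(xpart m) = P@_m.
Proof.
move=> hP hm; rewrite {1 2}(mpolyE P) (raddf_sum (@at1 n)) !(raddf_sum (mcoeff _)).
apply: eq_big_seq => m' hm' /=; rewrite at1Z at1X !mcoeffZ !mcoeffX.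
by congr (_ * (_ : bool)%:R); apply/eqP/eqP => [/(xpart_inj_homog hP hm' hm)|->].
Qed.

Lemma at1_homog_eq0 P d : ishomog P d -> at1 P = 0 -> P = 0.
Proof.
move=> hP h; apply/eqP; rewrite -msupp_eq0; case E: (msupp P) => [//|m s].
have hm : m \in msupp P by rewrite E inE eqxx.
by move: (hm); rewrite mcoeff_msupp -(at1_coeff_homog hP hm) h mcoeff0 eqxx.
Qed.

End Specialization.

Section LimitForm.
Variable n : nat.
Implicit Types (A B W : Pol n) (c d : 'I_n -> int) (h u : KK n) (k : 'I_n -> nat).

Lemma xK_neq0 i : xK i != 0 :> KK n.
Proof. by rewrite /xK tofrac_eq0 mpolyX_neq0. Qed.

Lemma tofrac_neq0_at0 A : at0 A != 0 -> A%:F != 0 :> KK n.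
Proof. by rewrite tofrac_eq0; apply: at0_neq0. Qed.

Lemma eq_xmonK c c' : c =1 c' -> xmonK c = xmonK c' :> KK n.
Proof. by move=> e; apply: eq_bigr => i _; rewrite e. Qed.

Lemma eq_tmon c c' : c =1 c' -> tmon c = tmon c' :> KK n.
Proof. by move=> e; apply: eq_bigr => i _; rewrite e. Qed.

Lemma xmonK0 : xmonK (fun _ => 0) = 1 :> KK n.
Proof. by rewrite /xmonK big1. Qed.

Lemma tmon0 : tmon (fun _ => 0) = 1 :> KK n.
Proof. by rewrite /tmon big1. Qed.

Lemma xmonKD c c' : xmonK (fun i => c i + c' i) = xmonK c * xmonK c' :> KK n.
Proof. by rewrite -big_split; apply: eq_bigr => i _; rewrite expfzDr ?xK_neq0. Qed.

Lemma xmonKN c : xmonK (fun i => - c i) = (xmonK c)^-1 :> KK n.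
Proof. by rewrite -prodfV; apply: eq_bigr => i _; rewrite invr_expz. Qed.

Lemma xmonK_neq0 c : xmonK c != 0 :> KK n.
Proof. by rewrite prodf_seq_neq0; apply/allP => i _; rewrite expfz_neq0 ?xK_neq0. Qed.

Lemma xmonK_nat k : xmonK (fun i => (k i)%:Z) = ('X_[txmnm (fun _ => 0%N) k])%:F.
Proof.
rewrite mpolyX_txmnm big1 ?mul1r ?rmorph_prod //.
by apply: eq_bigr => i _; rewrite rmorphXn.
Qed.

Lemma tmon_xmonK_nat k :
  tmon (fun i => (k i)%:Z) * xmonK (fun i => (k i)%:Z) = ('X_[txmnm k k])%:F.
Proof.
by rewrite mpolyX_txmnm tofracM !rmorph_prod; congr (_ * _);
  apply: eq_bigr => i _; rewrite rmorphXn.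
Qed.

(* h = X^c A / B with A, B homogeneous of the same degree, equal and nonzero
   at t = 0; hence h ~ X^c as t -> 0 *)
Definition limit_form h c := exists A B d,
  [/\ ishomog A d, ishomog B d, at0 A = at0 B, at0 B != 0
    & h = xmonK c * (A%:F / B%:F)].

Lemma eq_limit_form h c c' : limit_form h c -> c =1 c' -> limit_form h c'.
Proof.
by move=> [A [B [d [hA hB e0 nz ->]]]] e; exists A, B, d; rewrite (eq_xmonK e).
Qed.

Lemma limit_form_neq0 h c : limit_form h c -> h != 0.
Proof.
move=> [A [B [d [_ _ e0 nz ->]]]].
have nzA : A%:F != 0 by apply: tofrac_neq0_at0; rewrite e0.
apply: mulf_neq0; first exact: xmonK_neq0.
apply: mulf_neq0; first exact: nzA.
by rewrite invr_eq0; apply: tofrac_neq0_at0.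
Qed.

Lemma limit_form1 : limit_form 1 (fun _ => 0).
Proof.
exists 1, 1, (fun _ => 0); split.
- exact: homog1.
- exact: homog1.
- by [].
- by rewrite rmorph1 oner_neq0.
- by rewrite xmonK0 divr1 mulr1.
Qed.

Lemma limit_form_xK i : limit_form (xK i) (fun l => (l == i)%:R).
Proof.
have [A [B [d [hA hB e0 nz e1]]]] := limit_form1.
exists A, B, d; split => //; rewrite -[xK i]mulr1 e1 xmonK0 mul1r; congr (_ * _).
rewrite /xmonK (bigD1 i) //= eqxx expr1z big1 ?mulr1 // => l /negbTE ->.
exact: expr0z.
Qed.

Lemma limit_formM h1 h2 c1 c2 : limit_form h1 c1 -> limit_form h2 c2 ->
  limit_form (h1 * h2) (fun i => c1 i + c2 i).
Proof.
move=> [A1 [B1 [d1 [hA1 hB1 e1 nz1 ->]]]] [A2 [B2 [d2 [hA2 hB2 e2 nz2 ->]]]].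
exists (A1 * A2), (B1 * B2), (fun i => d1 i + d2 i); split.
- exact: homogM.
- exact: homogM.
- by rewrite !rmorphM /= e1 e2.
- by rewrite rmorphM; exact: mulf_neq0 nz1 nz2.
- by rewrite xmonKD !tofracM invfM mulrACA; congr (_ * _); exact: mulrACA.
Qed.

Lemma limit_formV h c : limit_form h c -> limit_form h^-1 (fun i => - c i).
Proof.
move=> [A [B [d [hA hB e0 nz ->]]]]; exists B, A, d; split.
- exact: hB.
- exact: hA.
- exact: esym e0.
- by rewrite e0.
- by rewrite xmonKN invfM invf_div.
Qed.

Lemma limit_formXn h c (m : nat) : limit_form h c ->
  limit_form (h ^+ m) (fun i => m%:Z * c i).
Proof.
move=> hh; elim: m => [|m IH].
  by rewrite expr0; apply: (eq_limit_form limit_form1) => i; rewrite mul0r.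
by rewrite exprS; apply: (eq_limit_form (limit_formM hh IH)) => i; rewrite intS; ring.
Qed.

Lemma limit_formXz h c (z : int) : limit_form h c ->
  limit_form (h ^ z) (fun i => z * c i).
Proof.
case: z => m hh; first exact: limit_formXn.
apply: (eq_limit_form (limit_formV (limit_formXn m.+1 hh))) => i.
by rewrite NegzE; ring.
Qed.

Lemma limit_formD_vanishing u c W : limit_form u c ->
  ishomog W (fun _ => 0) -> at0 W = 0 -> limit_form (u + xmonK c * W%:F) c.
Proof.
move=> [A [B [d [hA hB e0 nz ->]]]] hW eW.
exists (A + W * B), B, d; split; [| exact: hB | | exact: nz |].
- by apply: homogD hA _; apply: (eq_homog (homogM hW hB)) => i; rewrite add0r.
- by rewrite rmorphD rmorphM /= eW mul0r addr0.
- rewrite tofracD tofracM mulrDl -mulrA (divff (tofrac_neq0_at0 nz)) mulr1.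
  by rewrite mulrDr.
Qed.

Lemma tmon_nat k :
  tmon (fun i => (k i)%:Z) = xmonK (fun i => - (k i)%:Z) * ('X_[txmnm k k])%:F.
Proof. by rewrite -tmon_xmonK_nat xmonKN mulrCA (mulVf (xmonK_neq0 _)) mulr1. Qed.

Lemma limit_form_binomial e u :
  (exists l, e l != 0) -> ((forall l, 0 <= e l) \/ (forall l, e l <= 0)) ->
  limit_form u (fun l => - e l) ->
  limit_form (tmon (fun l => pos (e l)) + tmon (fun l => pos (- e l)) * u)
             (fun l => - pos (e l)).
Proof.
move=> [l0 el0] sc hu; pose k l := `|e l|%N; pose W : Pol n := 'X_[txmnm k k].
have hW : ishomog W (fun _ => 0).
  by apply: (eq_homog (homogX (m := txmnm k k))) => i; rewrite weight_txmnm subrr.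
have eW : at0 W = 0 by apply: (at0_txmnm (i := l0)); rewrite /k absz_eq0.
case: sc => [e_ge0 | e_le0].
- have ek l : e l = (k l)%:Z by rewrite /k gez0_abs.
  rewrite (eq_tmon (c := fun l => pos (e l)) (c' := fun l => (k l)%:Z)) => [|l];
    last by rewrite gez0_pos.
  rewrite (eq_tmon (c := fun l => pos (- e l)) (c' := fun _ => 0)) => [|l];
    last by rewrite lez0_pos // oppr_le0.
  rewrite tmon0 mul1r addrC tmon_nat.
  have hu' : limit_form u (fun l => - (k l)%:Z).
    by apply: (eq_limit_form hu) => l; rewrite ek.
  apply: (eq_limit_form (limit_formD_vanishing hu' hW eW)) => l.
  by rewrite (gez0_pos (e_ge0 l)) ek.
- have ek l : e l = - (k l)%:Z by rewrite /k lez0_abs ?opprK.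
  rewrite (eq_tmon (c := fun l => pos (e l)) (c' := fun _ => 0)) => [|l];
    last by rewrite lez0_pos.
  rewrite (eq_tmon (c := fun l => pos (- e l)) (c' := fun l => (k l)%:Z)) => [|l];
    last by rewrite gez0_pos ek ?opprK // oppr_ge0.
  have hu' : limit_form u (fun l => (k l)%:Z).
    by apply: (eq_limit_form hu) => l; rewrite ek opprK.
  have nzu := limit_form_neq0 hu'.
  have -> : tmon (fun _ => 0) + tmon (fun l => (k l)%:Z) * u =
            u * (u^-1 + xmonK (fun l => - (k l)%:Z) * W%:F).
    by rewrite tmon0 -tmon_nat mulrDr (divff nzu) mulrC.
  have hv := limit_formD_vanishing (limit_formV hu') hW eW.
  by apply: (eq_limit_form (limit_formM hu' hv)) => l; rewrite lez0_pos // subrr oppr0.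
Qed.

End LimitForm.

Section Mutation.
Variable n : nat.

Lemma limit_form_mut_Y (k : 'I_n) (Bm Cm : 'M[int]_n) (Y : 'I_n -> KK n) :
  (forall j, limit_form (Y j) (fun l => Cm l j)) ->
  (exists l, Cm l k != 0) -> ((forall l, 0 <= Cm l k) \/ (forall l, Cm l k <= 0)) ->
  forall i, limit_form (mut_Y k Bm Cm Y i) (fun l => mut_c k Bm Cm l i).
Proof.
move=> hY [l0 Cl0] sc i; rewrite /mut_Y.
case: (eqVneq i k) => [->|ik].
  by apply: (eq_limit_form (limit_formV (hY k))) => l; rewrite mxE eqxx.
have mut_cE l : mut_c k Bm Cm l i =
    Cm l i + pos (Cm l k) * Bm k i + Cm l k * pos (- Bm k i).
  by rewrite mxE (negbTE ik).
case: (eqVneq (Bm k i) 0) => [b0|b_neq0].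
  rewrite b0 oppr0 expr0z mulr1; apply: (eq_limit_form (hY i)) => l.
  by rewrite mut_cE b0 mulr0 oppr0 /pos /= mulr0 !addr0.
set b := Bm k i in b_neq0 *; set s := sgz b; pose e l := s * Cm l k.
have s_pm1 : s = 1 \/ s = -1.
  rewrite /s; case: (ltrgtP b 0) => [b_lt0|b_gt0|b_eq0].
  - by right; rewrite ltr0_sgz.
  - by left; rewrite gtr0_sgz.
  - by rewrite b_eq0 eqxx in b_neq0.
have hu : limit_form (Y k ^ (- s)) (fun l => - e l).
  by apply: (eq_limit_form (limit_formXz (- s) (hY k))) => l; rewrite /e mulNr.
have e_neq0 : exists l, e l != 0.
  by exists l0; rewrite mulf_neq0 //; case: s_pm1 => ->.
have e_sc : (forall l, 0 <= e l) \/ (forall l, e l <= 0).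
  rewrite /e; case: s_pm1 => ->; case: sc => h; [left|right|right|left] => l;
    by rewrite ?mul1r ?mulN1r ?oppr_le0 ?oppr_ge0.
have hbin := limit_form_binomial e_neq0 e_sc hu.
rewrite (eq_tmon (c := fun l => pos (- s * Cm l k)) (c' := fun l => pos (- e l)));
  last by move=> l; rewrite /e mulNr.
apply: (eq_limit_form (limit_formM (hY i) (limit_formXz (- b) hbin))) => l.
by rewrite mut_cE mulrNN mul_pos_sgz addrA.
Qed.

Lemma seed_step_fst (p : seq 'I_n) st :
  (foldl (@seed_step n) st p).1 =
  foldl (fun st k => (mut_mat k st.1, mut_c k st.1 st.2)) st.1 p.
Proof. by elim: p st => [|k p IH] st //=; rewrite IH. Qed.

Lemma limit_form_pullback (B : 'M[int]_n) (p : seq 'I_n) :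
  (forall q : seq 'I_n, reduced q -> sign_coherent (Cv B q)) ->
  reduced p -> forall j, limit_form (pullback B p j) (fun l => Cv B p l j).
Proof.
move=> sc; elim/last_ind: p => [|p k IH] red_pk j.
  rewrite /pullback /Cv /=; apply: (eq_limit_form (limit_form_xK j)) => l.
  by rewrite mxE.
have red_p : reduced p.
  by case: p red_pk {IH} => //= x p; rewrite rcons_path => /andP [].
have foldE : foldl (fun st k => (mut_mat k st.1, mut_c k st.1 st.2)) (B, 1%:M) p =
              (foldl (@seed_step n) (B, 1%:M, @xK n) p).1 by rewrite seed_step_fst.
have [Cv_neq0 Cv_sc] := sc p red_p k.
move: (IH red_p) Cv_neq0 Cv_sc; rewrite /pullback /Cv foldE => IHp Cv_neq0 Cv_sc.
by rewrite !foldl_rcons /= foldE; apply: limit_form_mut_Y.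
Qed.

End Mutation.

Section NormC.
Implicit Types x y : Cc.

Lemma normC_ge0 x : 0 <= normC x.
Proof. by case: x => a b; apply: sqrtr_ge0. Qed.

Lemma normC0 : normC 0 = 0.
Proof. exact: ComplexField.Normc.normc0. Qed.

Lemma normC_eq0 x : (normC x == 0) = (x == 0).
Proof.
apply/eqP/eqP => [/ComplexField.Normc.eq0_normc // | ->]; exact: normC0.
Qed.

Lemma normC_gt0 x : (0 < normC x) = (x != 0).
Proof. by rewrite lt_def normC_ge0 normC_eq0 andbT. Qed.

Lemma normCD x y : normC (x + y) <= normC x + normC y.
Proof. exact: le_normcD. Qed.

Lemma normCM x y : normC (x * y) = normC x * normC y.
Proof. exact: ComplexField.Normc.normcM. Qed.

Lemma normCV x : normC x^-1 = (normC x)^-1.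
Proof. exact: ComplexField.Normc.normcV. Qed.

Lemma normCN x : normC (- x) = normC x.
Proof. exact: normcN. Qed.

Lemma distCC x y : normC (x - y) = normC (y - x).
Proof. by rewrite -normCN opprB. Qed.

End NormC.

Definition tendsto1 (F : RR -> Cc) (L : Cc) := forall e : RR, 0 < e ->
  exists2 d : RR, 0 < d & forall s : RR, 1 - d < s < 1 -> normC (F s - L) < e.

Lemma window_min (d1 d2 s : RR) : 1 - Num.min d1 d2 < s < 1 ->
  (1 - d1 < s < 1) /\ (1 - d2 < s < 1).
Proof.
move=> /andP [hs1 hs2]; split; apply/andP; split => //; apply: le_lt_trans hs1;
  by rewrite lerD2l lerN2 ge_min lexx ?orbT.
Qed.

Lemma eq_tendsto1 F G L : F =1 G -> tendsto1 F L -> tendsto1 G L.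
Proof.
move=> e h eps heps; have [d hd H] := h _ heps.
by exists d => // s hs; rewrite -e; apply: H.
Qed.

Lemma tendsto1_cst (L : Cc) : tendsto1 (fun _ => L) L.
Proof. by move=> e he; exists 1 => // s _; rewrite subrr normC0. Qed.

Lemma tendsto1D F G L M : tendsto1 F L -> tendsto1 G M ->
  tendsto1 (fun s => F s + G s) (L + M).
Proof.
move=> hF hG e he; have he2 : 0 < e / 2 by lra.
have [d1 hd1 H1] := hF _ he2; have [d2 hd2 H2] := hG _ he2.
exists (Num.min d1 d2); first by rewrite lt_min hd1 hd2.
move=> s /window_min [/H1 h1 /H2 h2].
have -> : F s + G s - (L + M) = (F s - L) + (G s - M) by ring.
by apply: le_lt_trans (normCD _ _) _; lra.
Qed.

Lemma tendsto1M F G L M : tendsto1 F L -> tendsto1 G M ->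
  tendsto1 (fun s => F s * G s) (L * M).
Proof.
move=> hF hG e he.
pose K := 1 + normC L + normC M.
have hL := normC_ge0 L; have hM := normC_ge0 M.
have hK : 0 < K by rewrite /K; lra.
pose e' := Num.min 1 (e / K).
have he' : 0 < e' by rewrite lt_min ltr01 divr_gt0.
have e'1 : e' <= 1 by rewrite ge_min lexx.
have e'K : e' * K <= e by rewrite -ler_pdivlMr // ge_min lexx orbT.
have [d1 hd1 H1] := hF _ he'; have [d2 hd2 H2] := hG _ he'.
exists (Num.min d1 d2); first by rewrite lt_min hd1 hd2.
move=> s /window_min [/H1 ha /H2 hb].
have -> : F s * G s - L * M =
          (F s - L) * (G s - M) + (L * (G s - M) + M * (F s - L)) by ring.
apply: le_lt_trans (normCD _ _) _; rewrite normCM.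
apply: le_lt_trans (lerD (lexx _) (normCD _ _)) _; rewrite !normCM.
move: ha hb; set a := normC (F s - L); set b := normC (G s - M) => ha hb.
have a0 : 0 <= a := normC_ge0 _; have b0 : 0 <= b := normC_ge0 _.
have hab : a * b <= e'.
  rewrite -[e']mulr1; apply: ler_pM => //; first exact: ltW.
  exact: le_trans (ltW hb) e'1.
have hLb : normC L * b <= normC L * e' by apply: ler_wpM2l => //; apply: ltW.
have hMa : normC M * a <= normC M * e' by apply: ler_wpM2l => //; apply: ltW.
by move: e'K; rewrite /K; nra.
Qed.

Lemma tendsto1_away0 G M : tendsto1 G M -> M != 0 ->
  exists2 d : RR, 0 < d & forall s, 1 - d < s < 1 -> normC M / 2 < normC (G s).
Proof.
move=> hG hM; have hMp : 0 < normC M by rewrite normC_gt0.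
have [d hd H] := hG (normC M / 2) ltac:(lra).
exists d => // s /H; have := normCD (M - G s) (G s); rewrite subrK distCC; lra.
Qed.

Lemma tendsto1V G M : tendsto1 G M -> M != 0 -> tendsto1 (fun s => (G s)^-1) M^-1.
Proof.
move=> hG hM e he; have m0 : 0 < normC M by rewrite normC_gt0.
have [d1 hd1 H1] := tendsto1_away0 hG hM.
pose e' := e * (normC M * normC M) / 2.
have he' : 0 < e' by rewrite /e' divr_gt0 ?mulr_gt0.
have [d2 hd2 H2] := hG _ he'.
exists (Num.min d1 d2); first by rewrite lt_min hd1 hd2.
move=> s /window_min [/H1 g1 /H2 g2].
have Gs0 : G s != 0 by rewrite -normC_gt0; apply: lt_trans g1; lra.
have -> : (G s)^-1 - M^-1 = (M - G s) / (G s * M).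
  by rewrite invfM mulrBl mulrCA (divff hM) mulr1 mulrA (divff Gs0) mul1r.
rewrite normCM normCV normCM distCC.
move: m0 g1 g2; set g := normC (G s); set m := normC M; set a := normC (G s - M).
move=> m0 g1 g2; have g0 : 0 < g by lra.
rewrite ltr_pdivrMr ?mulr_gt0 //; apply: lt_le_trans g2 _.
have -> : e' = e * m * (m / 2) by rewrite /e' -/m; ring.
by rewrite [g * m]mulrC [e * (m * g)]mulrA ler_pM2l ?mulr_gt0 // ltW.
Qed.

Lemma tendsto1_sum (I : Type) (r : seq I) (F : I -> RR -> Cc) (L : I -> Cc) :
  (forall i, tendsto1 (F i) (L i)) ->
  tendsto1 (fun s => \sum_(i <- r) F i s) (\sum_(i <- r) L i).
Proof.
move=> h; elim: r => [|x r IH].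
  by rewrite big_nil; apply: (eq_tendsto1 _ (tendsto1_cst 0)) => s; rewrite big_nil.
rewrite big_cons; apply: (eq_tendsto1 _ (tendsto1D (h x) IH)) => s.
by rewrite big_cons.
Qed.

Lemma tendsto1_prod (I : Type) (r : seq I) (F : I -> RR -> Cc) (L : I -> Cc) :
  (forall i, tendsto1 (F i) (L i)) ->
  tendsto1 (fun s => \prod_(i <- r) F i s) (\prod_(i <- r) L i).
Proof.
move=> h; elim: r => [|x r IH].
  by rewrite big_nil; apply: (eq_tendsto1 _ (tendsto1_cst 1)) => s; rewrite big_nil.
rewrite big_cons; apply: (eq_tendsto1 _ (tendsto1M (h x) IH)) => s.
by rewrite big_cons.
Qed.

Lemma tendsto1Xn F L (m : nat) :
  tendsto1 F L -> tendsto1 (fun s => F s ^+ m) (L ^+ m).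
Proof.
move=> h; elim: m => [|m IH].
  by rewrite expr0; apply: (eq_tendsto1 _ (tendsto1_cst 1)) => s; rewrite expr0.
by rewrite exprS; apply: (eq_tendsto1 _ (tendsto1M h IH)) => s; rewrite exprS.
Qed.

Lemma tendsto1_meval k (v : RR -> 'I_k -> Cc) v0 (P : {mpoly Cc[k]}) :
  (forall j, tendsto1 (fun s => v s j) (v0 j)) ->
  tendsto1 (fun s => meval (v s) P) (meval v0 P).
Proof.
move=> hv; rewrite mevalE; apply: (eq_tendsto1 (fun s => esym (mevalE _ _))).
apply: tendsto1_sum => m; apply: tendsto1M (tendsto1_cst _) _.
by apply: tendsto1_prod => i; apply: tendsto1Xn.
Qed.

Section RationalFunctions.
Variable n : nat.
Implicit Types (P Q : Pol n) (c d : 'I_n -> int) (h : KK n).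

Lemma tofrac_div_eq P Q P' Q' : Q != 0 -> Q' != 0 ->
  (P%:F / Q%:F == P'%:F / Q'%:F :> KK n) = (P * Q' == P' * Q).
Proof. by move=> nQ nQ'; rewrite eqr_div ?tofrac_eq0 // -!tofracM tofrac_eq. Qed.

Definition posn c i := `|pos (c i)|%N.

Lemma posnE c i : c i = (posn c i)%:Z - (posn (fun l => - c l) i)%:Z.
Proof. by rewrite /posn !gez0_abs ?pos_ge0 // -pos_subr. Qed.

Definition xpos c : Pol n := 'X_[txmnm (fun _ => 0%N) (posn c)].

Lemma xmonK_frac c : xmonK c = (xpos c)%:F / (xpos (fun l => - c l))%:F :> KK n.
Proof.
rewrite (eq_xmonK (posnE c)) (xmonKD _ (fun i => - _)) xmonKN.
by rewrite !xmonK_nat.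
Qed.

Lemma limit_form_frac h c : limit_form h c -> exists A B d,
  [/\ ishomog A d, ishomog B d, at0 A = at0 B, at0 B != 0
    & h = (xpos c * A)%:F / (xpos (fun l => - c l) * B)%:F].
Proof.
move=> [A [B [d [hA hB e0 nz ->]]]]; exists A, B, d; split => //.
by rewrite xmonK_frac !tofracM invfM mulrACA.
Qed.

Lemma limit_form_homogK h c : limit_form h c -> homogK h c.
Proof.
move=> /limit_form_frac [A [B [d [hA hB _ nz ->]]]].
exists (xpos c * A), (xpos (fun l => - c l) * B).
exists (fun i => weight (txmnm (fun _ => 0%N) (posn c)) i + d i).
exists (fun i => weight (txmnm (fun _ => 0%N) (posn (fun l => - c l))) i + d i).
split; last split; last split; last split.
- by apply: mulf_neq0; [exact: mpolyX_neq0 | exact: at0_neq0 nz].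
- by [].
- exact: homogM (homogX (m := _)) hA.
- exact: homogM (homogX (m := _)) hB.
- by move=> i; rewrite !weight_txmnm (posnE c i); ring.
Qed.

Lemma valueAt_frac h P Q q z : Q != 0 -> h = P%:F / Q%:F ->
  meval q Q != 0 -> valueAt h q z -> z = meval q P / meval q Q.
Proof.
move=> nQ eh Qq [P' [Q' [Q'q [eh' ->]]]].
have nQ' : Q' != 0 by apply: contraNneq Q'q => ->; rewrite meval0.
move: (eh'); rewrite eh => /eqP; rewrite tofrac_div_eq // => /eqP /(congr1 (meval q)).
by rewrite !mevalM => e; apply/eqP; rewrite eqr_div // e.
Qed.

Lemma meval_pt0_xpos (x : 'I_n -> Cc) c :
  meval (pt (fun _ => 0) x) (xpos c) = \prod_i x i ^+ posn c i.
Proof.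
rewrite /xpos mpolyX_txmnm mevalM big1 ?meval1 ?mul1r => [|i _]; last by rewrite expr0.
rewrite rmorph_prod; apply: eq_bigr => i _.
by rewrite rmorphXn /= mevalXU /pt (unsplitK (inr _ i)).
Qed.

Lemma prodXz_posn (x : 'I_n -> Cc) c : (forall i, x i != 0) ->
  \prod_i x i ^ c i =
  (\prod_i x i ^+ posn c i) / \prod_i x i ^+ posn (fun l => - c l) i.
Proof.
move=> x_neq0; rewrite -prodfV -big_split; apply: eq_bigr => i _ /=.
by rewrite (posnE c i) expfzDr ?x_neq0 // -invr_expz.
Qed.

Lemma tendsto1_pt (gam : RR -> 'I_n -> Cc) (x : 'I_n -> Cc) :
  path_cont gam -> gam 1 = (fun _ => 0) ->
  forall k, tendsto1 (fun s => pt (gam s) x k) (pt (fun _ => 0) x k).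
Proof.
move=> cont gam1 k; rewrite /pt; case: (split k) => i; last exact: tendsto1_cst.
move=> e he; have [d hd H] := cont 1 ltac:(by rewrite ler01 lexx) e he.
exists (Num.min d 1); first by rewrite lt_min hd ltr01.
move=> s /window_min [/andP [s1 s2] /andP [s3 _]].
rewrite -[0](congr1 (fun v => v i) gam1).
by apply: H; [apply/andP; split; lra | rewrite ler0_norm; lra].
Qed.

Lemma limit_form_LimitProp h c : limit_form h c -> LimitProp h c.
Proof.
move=> /limit_form_frac [A [B [d [_ _ e0 nz eh]]]].
set P := xpos c * A; set Q := xpos (fun l => - c l) * B.
have nQ : Q != 0 by apply: mulf_neq0; [exact: mpolyX_neq0 | exact: at0_neq0 nz].
exists (at0 B * \prod_(i < n) 'X_i).
  by rewrite mulf_neq0 // prodf_seq_neq0; apply/allP => i _; apply: mpolyX_neq0.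
move=> x; rewrite mevalM mulf_eq0 negb_or rmorph_prod /=.
move=> /andP [Bx0 /prodf_neq0 x_neq0].
have {}x_neq0 i : x i != 0 by have := x_neq0 i isT; rewrite mevalXU.
move=> gam cont gam1 _ e he.
have hv := tendsto1_pt x cont gam1.
have P0 : meval (pt (fun _ => 0) x) P =
          (\prod_i x i ^+ posn c i) * meval x (at0 B).
  by rewrite mevalM meval_pt0_xpos -e0 meval_at0.
have Q0 : meval (pt (fun _ => 0) x) Q =
          (\prod_i x i ^+ posn (fun l => - c l) i) * meval x (at0 B).
  by rewrite mevalM meval_pt0_xpos meval_at0.
have Q0_neq0 : meval (pt (fun _ => 0) x) Q != 0.
  by rewrite Q0 mulf_neq0 // prodf_seq_neq0; apply/allP => i _; rewrite expf_neq0.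
have [d1 hd1 H1] := tendsto1M (tendsto1_meval P hv)
                      (tendsto1V (tendsto1_meval Q hv) Q0_neq0) he.
have [d2 hd2 H2] := tendsto1_away0 (tendsto1_meval Q hv) Q0_neq0.
exists (Num.min d1 d2); first by rewrite lt_min hd1 hd2.
move=> s /window_min [/H1 near1 /H2 near2] z hz.
have Qs_neq0 : meval (pt (gam s) x) Q != 0.
  by rewrite -normC_gt0; apply: le_lt_trans near2; rewrite divr_ge0 ?normC_ge0.
rewrite (valueAt_frac nQ eh Qs_neq0 hz); move: near1.
by rewrite P0 Q0 prodXz_posn // invfM mulrACA divff ?mulr1.
Qed.

End RationalFunctions.

Section Homogenization.
Variable n : nat.
Implicit Types (P Q : Pol n) (c d : 'I_n -> int) (h : KK n) (f g : {mpoly Cc[n]}).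

Lemma at1_homog_neq0 Q d : ishomog Q d -> Q != 0 -> at1 Q != 0.
Proof. by move=> hQ; apply: contra => /eqP /(at1_homog_eq0 hQ) ->. Qed.

Lemma SpecOne_cross h P Q f g : Q != 0 -> h = P%:F / Q%:F -> SpecOne h f g ->
  at1 P * g = at1 Q * f.
Proof.
move=> nQ eh [P1 [Q1 [eh1 [nQ1 E1]]]].
have nQ1' : Q1 != 0 by apply: contraNneq nQ1 => ->; rewrite rmorph0.
move: eh1; rewrite eh => /eqP; rewrite (tofrac_div_eq _ _ nQ nQ1').
move=> /eqP /(congr1 (@at1 n)).
rewrite !at1M => E; rewrite [RHS]mulrC.
by apply: (cross_mul_trans nQ1 E); rewrite [RHS]mulrC; exact: E1.
Qed.

Lemma homogK_SpecOne_uniq h h' c f g : g != 0 -> homogK h c -> homogK h' c ->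
  SpecOne h f g -> SpecOne h' f g -> h = h'.
Proof.
move=> ng [P [Q [dP [dQ [nQ [eh [hP [hQ dPQ]]]]]]]].
move=> [P' [Q' [dP' [dQ' [nQ' [eh' [hP' [hQ' dPQ']]]]]]]] s s'.
have E := SpecOne_cross nQ eh s; have E' := SpecOne_cross nQ' eh' s'.
rewrite eh eh'; apply/eqP; rewrite (tofrac_div_eq _ _ nQ nQ') -subr_eq0; apply/eqP.
apply: (at1_homog_eq0 (d := fun i => dP i + dQ' i)).
  apply: homogD (homogM hP hQ') _; apply: homogN.
  by apply: (eq_homog (homogM hP' hQ)) => i; have := dPQ i; have := dPQ' i; lia.
rewrite at1B !at1M; apply/eqP; rewrite subr_eq0; apply/eqP.
apply: (cross_mul_trans (c := f) ng); first by rewrite [RHS]mulrC; exact: E.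
by rewrite [LHS]mulrC; exact: esym E'.
Qed.

Lemma homog_tlift (N : 'I_n -> nat) f :
  ishomog (tlift (fun m i => (m i + N i)%N) f) (fun i => - (N i)%:Z).
Proof.
apply: (big_ind (fun P => ishomog P _)); first exact: homog0.
  by move=> P Q; apply: homogD.
move=> m _; rewrite -mpolyX_txmnm; apply: homogZ.
by apply: (eq_homog (homogX (m := _))) => i; rewrite weight_txmnm PoszD; ring.
Qed.

Lemma SpecOne_tlift a b f g : g != 0 ->
  SpecOne ((tlift a f)%:F / (tlift b g)%:F) f g.
Proof.
move=> ng; exists (tlift a f), (tlift b g); rewrite !at1_tlift.
by split; last split; [| exact: ng | exact: mulrC].
Qed.

Lemma homogK_tlift c f g : g != 0 ->
  homogK ((tlift (fun m i => (m i + posn (fun l => - c l) i)%N) f)%:F /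
          (tlift (fun m i => (m i + posn c i)%N) g)%:F) c.
Proof.
move=> ng; exists (tlift (fun m i => (m i + posn (fun l => - c l) i)%N) f),
  (tlift (fun m i => (m i + posn c i)%N) g),
  (fun i => - (posn (fun l => - c l) i)%:Z), (fun i => - (posn c i)%:Z).
split; last split; last split; last split.
- by apply: contraNneq ng => /(congr1 (@at1 n)); rewrite at1_tlift rmorph0 => ->.
- by [].
- exact: homog_tlift.
- exact: homog_tlift.
- by move=> i; rewrite (posnE c i); ring.
Qed.

Lemma exists_coprime_frac f0 g0 : g0 != 0 ->
  exists f g, [/\ g != 0, mcoprime f g & f0 * g = g0 * f].
Proof.
suff coprime_below N f g : g != 0 -> (msize g < N)%N -> f0 * g = g0 * f ->
    exists f' g', [/\ g' != 0, mcoprime f' g' & f0 * g' = g0 * f'].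
  by move=> ng0; apply: (coprime_below (msize g0).+1 f0 g0) => //; rewrite mulrC.
elim: N f g => [//|N IH] f g ng ltN E.
case: (classic (mcoprime f g)) => [cop | ncop]; first by exists f, g.
have [r [a [b [fE gE r_gt1]]]] :
    exists r a b, [/\ f = r * a, g = r * b & (1 < msize r)%N].
  apply: NNPP => nex; apply: ncop => r a b fE gE; rewrite leqNgt; apply/negP.
  by move=> r_gt1; apply: nex; exists r, a, b.
have nr : r != 0 by apply: contraNneq ng => r0; rewrite gE r0 mul0r.
have nb : b != 0 by apply: contraNneq ng => b0; rewrite gE b0 mulr0.
apply: (IH a b nb).
  move: ltN r_gt1; rewrite gE msizeM // -subn1.
  by move: (msize r) (msize b) => x y; lia.
by apply: (mulfI nr); rewrite mulrCA -gE E fE mulrCA.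
Qed.

Lemma homogK_exists_coprime h c : homogK h c ->
  exists f g, g != 0 /\ mcoprime f g /\ SpecOne h f g.
Proof.
move=> [P [Q [dP [dQ [nQ [eh [hP [hQ _]]]]]]]].
have [f [g [ng cop E]]] := exists_coprime_frac (at1 P) (at1_homog_neq0 hQ nQ).
exists f, g; split=> //; split=> //; exists P, Q; split=> //; split.
  exact: at1_homog_neq0 hQ nQ.
exact: E.
Qed.

End Homogenization.

Unset Implicit Arguments.
Theorem mainTheorem6 (n : nat) (B : 'M[int]_n) (F : {set 'I_n}) :
  (0 < n)%N -> skew_symmetrizable B ->
  (forall q : seq 'I_n, reduced q -> sign_coherent (Cv B q)) ->
  forall (p : seq 'I_n), in_TF F p -> forall i : 'I_n,
    let h := pullback B p i in
    let c := fun l => Cv B p l i in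
    LimitProp h c /\
    (exists f g : {mpoly Cc[n]}, g != 0 /\ mcoprime f g /\ SpecOne h f g) /\
    (forall f g : {mpoly Cc[n]}, g != 0 -> mcoprime f g -> SpecOne h f g ->
       IsHomogenization h f g c /\
       forall h' : KK n, IsHomogenization h' f g c -> LimitProp h' c -> h' = h).
Proof.
(* only sign-coherence is used, and uniqueness needs homogeneity alone,
   not the limit property of h' *)
move=> _ _ sc p /andP [red_p _] i h c.
have hL : limit_form h c := limit_form_pullback sc red_p i.
have hH := limit_form_homogK hL.
split; first exact: limit_form_LimitProp.
split; first exact: homogK_exists_coprime hH.
move=> f g ng _ hS; split.
  exists (fun m j => (m j + posn (fun l => - c l) j)%N).
  exists (fun m j => (m j + posn c j)%N).
  split; last exact: hH.
  apply: (homogK_SpecOne_uniq ng hH (homogK_tlift c f ng) hS).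
  exact: SpecOne_tlift.
move=> h' [a [b [eh' hH']]] _.
apply: (homogK_SpecOne_uniq ng hH' hH _ hS).
by rewrite eh'; apply: SpecOne_tlift.
Qed.
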